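(* Let $S\subseteq[d]$ with $|S|=\kappa\ge2$, let $\theta\in\mathbb{R}^d$ satisfy $|\theta_i|\le b$ for all $i$, and let $\sigma$ be a ranking of $S$ drawn from the PL model with parameter $\theta$, with $\sigma^{-1}(i)$ denoting the position of item $i$. Then for any two distinct items $i,i'\in S$ and any $1\le\ell,\ell_1,\ell_2\le\kappa-1$: $$\mathbb{P}_\theta\big[\sigma^{-1}(i)>\ell,\ \sigma^{-1}(i')>\ell\big]\ \ge\ \frac{e^{-4b}(\kappa-\ell)(\kappa-\ell-1)}{\kappa(\kappa-1)}\Big(1-\frac{\ell}{\kappa}\Big)^{2e^{2b}-2},$$ $$\mathbb{P}_\theta\big[\sigma^{-1}(i)=\ell\big]\ \le\ \frac{e^{6b}}{\kappa-\ell},$$ $$\mathbb{P}_\theta\big[\sigma^{-1}(i)=\ell_1,\ \sigma^{-1}(i')=\ell_2\big]\ \le\ \frac{e^{10b}}{(\kappa-\ell_1-1)(\kappa-\ell_2)},$$ where the last right-hand side is interpreted as $+\infty$ if its denominator vanishes.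
   Context: PL model: items $[d]$, parameter $\theta\in\mathbb{R}^d$; when a set $S$ is offered, a ranking $\sigma:[|S|]\to S$ (a bijection from positions to items; position 1 is most preferred) is drawn with probability $\prod_{i=1}^{|S|-1}e^{\theta_{\sigma(i)}}/\sum_{i'=i}^{|S|}e^{\theta_{\sigma(i')}}$. *)

From Stdlib Require Import Reals.
From mathcomp Require Import all_boot.
Set Implicit Arguments. Unset Strict Implicit. Unset Printing Implicit Defensive.

(* A ranking of S : a bijection sigma from positions 'I_|S| (0-based; position
   j here is position j+1 of the paper) onto S, i.e. an injective map with
   values in S (injective + #|domain| = #|S| gives bijectivity). *)
Definition ranking (d : nat) (S : {set 'I_d}) (sigma : {ffun 'I_#|S| -> 'I_d}) : bool :=
  injectiveb sigma && [forall j, sigma j \in S].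

Definition PL_prob (d : nat) (theta : 'I_d -> R) (S : {set 'I_d})
  (sigma : {ffun 'I_#|S| -> 'I_d}) : R :=
  \big[Rmult/R1]_(i < #|S| | (i.+1 < #|S|)%N)
     Rdiv (exp (theta (sigma i)))
      (\big[Rplus/R0]_(i' < #|S| | (i <= i')%N) exp (theta (sigma i'))).

Definition PL_P (d : nat) (theta : 'I_d -> R) (S : {set 'I_d})
  (E : {ffun 'I_#|S| -> 'I_d} -> bool) : R :=
  \big[Rplus/R0]_(sigma : {ffun 'I_#|S| -> 'I_d} | ranking sigma && E sigma)
     PL_prob theta sigma.
Arguments PL_P d theta S E : clear implicits.
Arguments PL_P {d}.

Definition pos_is (d : nat) (S : {set 'I_d}) (sigma : {ffun 'I_#|S| -> 'I_d})
  (x : 'I_d) (p : nat) : bool :=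
  [exists j : 'I_#|S|, (sigma j == x) && (j.+1 == p)].

Definition pos_gt (d : nat) (S : {set 'I_d}) (sigma : {ffun 'I_#|S| -> 'I_d})
  (x : 'I_d) (l : nat) : bool :=
  [exists j : 'I_#|S|, (sigma j == x) && (l < j.+1)%N].

(* Sample the PL ranking one position at a time: the item chosen first is [x]
   with probability [w x / sum w], which is at most [rho / n] when all weight
   ratios are bounded by [rho] (here [rho = e^(2b)]), and conditionally on the
   first choice the rest is a PL ranking of the remaining items.  Induction on
   the position then gives [P(pos x = j) <= rho / (n - j)] and the product bound
   for two items.  For the lower bound, neither of two fixed items is chosen
   first with probability at least [(n-2) / (n-2+2 rho)], which dominates
   [(n-2)/n * ((n-1)/n)^(2 rho - 2)]; the product of these factors over the first
   [l] rounds telescopes to [(n-l)(n-l-1)/(n(n-1)) * ((n-l)/n)^(2 rho - 2)]. *)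

From HB Require Import structures.
From Stdlib Require Import Reals Lra.
From mathcomp Require Import all_boot.
Set Implicit Arguments. Unset Strict Implicit. Unset Printing Implicit Defensive.
Local Open Scope R_scope.

HB.instance Definition _ := Monoid.isComLaw.Build R R0 Rplus
  (fun x y z => esym (Rplus_assoc x y z)) Rplus_comm Rplus_0_l.
HB.instance Definition _ := Monoid.isComLaw.Build R R1 Rmult
  (fun x y z => esym (Rmult_assoc x y z)) Rmult_comm Rmult_1_l.

Lemma sumR_le (T : eqType) (s : seq T) (F G : T -> R) :
  (forall x, x \in s -> F x <= G x) ->
  \big[Rplus/R0]_(x <- s) F x <= \big[Rplus/R0]_(x <- s) G x.
Proof.
move=> FG; rewrite !big_seq.
by apply: (big_ind2 Rle) => [|*|]; [lra | exact: Rplus_le_compat | exact: FG].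
Qed.

Lemma sumR_ge0 (T : Type) (s : seq T) (F : T -> R) :
  (forall x, 0 <= F x) -> 0 <= \big[Rplus/R0]_(x <- s) F x.
Proof. by move=> F0; apply: (big_ind (Rle 0)) => [|*|]; [lra | exact: Rplus_le_le_0_compat |]. Qed.

Lemma Rmult_sumr (T : Type) (s : seq T) (F : T -> R) a :
  a * \big[Rplus/R0]_(x <- s) F x = \big[Rplus/R0]_(x <- s) (a * F x).
Proof. by elim: s => [|y s IH]; rewrite ?big_nil ?big_cons -?IH; ring. Qed.

Lemma sumR_const (T : Type) (s : seq T) c :
  \big[Rplus/R0]_(x <- s) c = INR (size s) * c.
Proof.
elim: s => [|y s IH]; first by rewrite big_nil /=; ring.
by rewrite big_cons IH (S_INR (size s)); ring.
Qed.

Lemma sumR_pred1_uniq (T : eqType) (s : seq T) (x : T) a :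
  uniq s -> \big[Rplus/R0]_(y <- s) (if y == x then a else 0) = if x \in s then a else 0.
Proof.
elim: s => [|y s IH] /=; first by rewrite big_nil.
move=> /andP[ys us]; rewrite big_cons IH // inE.
case: (eqVneq y x) => [<-|_] /=; last by rewrite Rplus_0_l.
by rewrite (negbTE ys) Rplus_0_r.
Qed.

Lemma Rdiv_le_cross a b c d : 0 < b -> 0 < d -> a * d <= c * b -> a / b <= c / d.
Proof.
move=> b0 d0 adcb.
have -> : a / b = a * d * / (b * d) by field; lra.
have -> : c / d = c * b * / (b * d) by field; lra.
by apply: Rmult_le_compat_r => //; apply/Rlt_le/Rinv_0_lt_compat/Rmult_lt_0_compat.
Qed.

Lemma INR_pred n : (0 < n)%N -> INR n.-1 = INR n - 1.
Proof. by case: n => // n _; rewrite S_INR /=; ring. Qed.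

Lemma INR_size_rem_sub (T : eqType) (t : seq T) y j : y \in t ->
  INR (size (rem y t)) - INR j = INR (size t) - INR j.+1.
Proof. by move=> yt; rewrite size_rem // INR_pred ?S_INR; [ring | case: (t) yt]. Qed.

Lemma perm_rem2 (T : eqType) (t : seq T) x x' : x \in t -> x' \in rem x t ->
  perm_eq t (x :: x' :: rem x' (rem x t)).
Proof. by move=> xt x't; apply: perm_trans (perm_to_rem xt) _; rewrite perm_cons perm_to_rem. Qed.

Lemma exp_le_exp x y : x <= y -> exp x <= exp y.
Proof. by move=> [xy|->]; [left; exact: exp_increasing | lra]. Qed.

(* From [ln u <= u - 1] and [1 + v <= exp v]. *)
Lemma Rpower_pred_div_le m a : 1 < m -> 0 <= a -> Rpower ((m - 1) / m) a <= m / (m + a).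
Proof.
move=> m1 a0; have u0 : 0 < (m - 1) / m by apply: Rdiv_lt_0_compat; lra.
have ln_u : ln ((m - 1) / m) <= - / m.
  have := exp_ineq1_le (ln ((m - 1) / m)); rewrite exp_ln //.
  by rewrite (_ : (m - 1) / m = 1 - / m); [lra | field; lra].
apply: (Rle_trans _ (exp (- (a / m)))).
  by apply: exp_le_exp; rewrite /Rdiv Ropp_mult_distr_r; apply: Rmult_le_compat_l.
have am : 0 <= a / m by apply: Rmult_le_pos; [lra | apply/Rlt_le/Rinv_0_lt_compat; lra].
rewrite exp_Ropp (_ : m / (m + a) = / (1 + a / m)); last by field; lra.
by apply: Rinv_le_contravar; [lra | exact: exp_ineq1_le].
Qed.

(* Lower bound, for [a = 2 rho - 2], on the probability that neither of two
   fixed items is ranked first among [m] items whose weight ratios are at most [rho]. *)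
Definition tail_pair_factor (a : R) (m : nat) : R :=
  (INR m - 2) / INR m * Rpower ((INR m - 1) / INR m) a.

Fixpoint tail_pair_lb (a : R) (n l : nat) : R :=
  if l is l'.+1 then tail_pair_factor a n * tail_pair_lb a n.-1 l' else 1.

Lemma tail_pair_factor_ge0 a m : (2 <= m)%N -> 0 <= tail_pair_factor a m.
Proof.
move=> m2; have mR : 2 <= INR m by apply: (le_INR 2); apply/leP.
apply: Rmult_le_pos; last exact/Rlt_le/exp_pos.
by apply: Rmult_le_pos; [lra | apply/Rlt_le/Rinv_0_lt_compat; lra].
Qed.

Lemma tail_pair_lb_ge0 a n l : (l < n)%N -> 0 <= tail_pair_lb a n l.
Proof.
elim: l n => [|l IH] [|n] //= ln; first lra.
by apply: Rmult_le_pos; [apply: tail_pair_factor_ge0; case: n ln | exact: IH].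
Qed.

(* The product telescopes: [(m - 2) / m] against [m (m - 1)] and the powers of
   [(m - 1) / m] into a single power of [(n - l) / n]. *)
Lemma tail_pair_lb_closed a n l : (l < n)%N ->
  INR n * (INR n - 1) * tail_pair_lb a n l
  = (INR n - INR l) * (INR n - INR l - 1) * Rpower ((INR n - INR l) / INR n) a.
Proof.
elim: l n => [|l IH] n ln.
  have n0 : 0 < INR n by apply/lt_0_INR/ltP.
  rewrite /= Rminus_0_r (_ : INR n / INR n = 1); last by field; lra.
  by rewrite /Rpower ln_1 Rmult_0_r exp_0; ring.
case: n ln => // n ln; have {}IH := IH n ln.
have nR : 1 <= INR n by apply: (le_INR 1); apply/leP; case: (n) ln.
have lR : INR l + 1 <= INR n by rewrite -S_INR; apply/le_INR/leP.
rewrite [tail_pair_lb _ _ _]/= /tail_pair_factor !S_INR.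
rewrite (_ : INR n + 1 - (INR l + 1) = INR n - INR l); last ring.
rewrite (_ : INR n + 1 - 1 = INR n); last ring.
rewrite (_ : (INR n - INR l) / (INR n + 1) = INR n / (INR n + 1) * ((INR n - INR l) / INR n));
  last by field; lra.
rewrite -Rpower_mult_distr; try by apply: Rdiv_lt_0_compat; lra.
set p := Rpower (INR n / (INR n + 1)) a.
transitivity (p * (INR n * (INR n - 1) * tail_pair_lb a n l)); first by field; lra.
by rewrite IH; ring.
Qed.

Section PlackettLuce.
Variables (T : eqType) (w : T -> R).
Hypothesis w_gt0 : forall x, 0 < w x.

Definition wsum (s : seq T) : R := \big[Rplus/R0]_(y <- s) w y.

(* The factor of the last item is [w y / w y = 1], matching the product over
   the first [|S| - 1] positions in [PL_prob]. *)
Fixpoint PL_seq (s : seq T) : R :=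
  if s is y :: s' then w y / (w y + wsum s') * PL_seq s' else 1.

Definition PL_event (t : seq T) (P : pred (seq T)) : R :=
  \big[Rplus/R0]_(s <- permutations t) (if P s then PL_seq s else 0).

Lemma wsum_ge0 s : 0 <= wsum s.
Proof. by apply: sumR_ge0 => x; apply: Rlt_le. Qed.

Lemma wsum_gt0 t : (0 < size t)%N -> 0 < wsum t.
Proof.
case: t => // y t _; rewrite /wsum big_cons -/(wsum t).
by have := wsum_ge0 t; have := w_gt0 y; lra.
Qed.

Lemma sumR_share t c : (0 < size t)%N ->
  \big[Rplus/R0]_(y <- t) (w y / wsum t * c) = c.
Proof.
move=> /wsum_gt0 tW.
rewrite (eq_bigr (fun y => c / wsum t * w y)); last by move=> y _; rewrite /Rdiv; ring.
by rewrite -Rmult_sumr -/(wsum t); field; lra.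
Qed.

Lemma perm_wsum s1 s2 : perm_eq s1 s2 -> wsum s1 = wsum s2.
Proof. exact: perm_big. Qed.

Lemma wsum_rem t y : y \in t -> wsum t = w y + wsum (rem y t).
Proof. by move=> yt; rewrite (perm_wsum (perm_to_rem yt)) /wsum big_cons. Qed.

Lemma eq_PL_event t P Q : P =1 Q -> PL_event t P = PL_event t Q.
Proof. by move=> PQ; apply: eq_bigr => s _; rewrite PQ. Qed.

Lemma PL_event_pred0 t P : P =1 xpred0 -> PL_event t P = 0.
Proof. by move=> P0; rewrite /PL_event big1 // => s _; rewrite P0. Qed.

Lemma PL_event_first t P : uniq t -> (0 < size t)%N ->
  PL_event t P = \big[Rplus/R0]_(y <- t)
    (w y / wsum t * PL_event (rem y t) (fun s => P (y :: s))).
Proof.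
move=> ut t0; rewrite /PL_event (perm_big _ (permutationsE t0)) undup_id //.
rewrite big_allpairs_dep; apply: eq_big_seq => y yt.
rewrite Rmult_sumr; apply: eq_big_seq => s; rewrite mem_permutations => ps /=.
by rewrite (perm_wsum ps) -wsum_rem //; case: (P _); ring.
Qed.

Lemma PL_event_predT t : uniq t -> PL_event t xpredT = 1.
Proof.
move st : (size t) => n; elim: n t st => [|n IH] t st ut.
  by case: t st ut => // _ _; rewrite /PL_event /= big_cons big_nil Rplus_0_r.
have t0 : (0 < size t)%N by rewrite st.
rewrite PL_event_first // -[RHS](sumR_share 1 t0); apply: eq_big_seq => y yt.
by rewrite IH ?rem_uniq // size_rem // st.
Qed.

Lemma PL_event_first_le t P M : uniq t -> (0 < size t)%N ->
  (forall y, y \in t -> PL_event (rem y t) (fun s => P (y :: s)) <= M) ->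
  PL_event t P <= M.
Proof.
move=> ut t0 bound; rewrite PL_event_first // -[M](sumR_share M t0).
apply: sumR_le => y yt; apply: Rmult_le_compat_l; last exact: bound.
by apply/Rlt_le/Rdiv_lt_0_compat; [|exact: wsum_gt0].
Qed.

Variable rho : R.
Hypothesis w_ratio : forall x y, w x <= rho * w y.

Lemma rho_ge1 (x : T) : 1 <= rho.
Proof. by have := w_ratio x x; have := w_gt0 x; nra. Qed.

Lemma wshare_le x t : (0 < size t)%N -> w x / wsum t <= rho / INR (size t).
Proof.
move=> t0; apply: Rdiv_le_cross; [exact: wsum_gt0 | exact/lt_0_INR/ltP |].
rewrite Rmult_comm -sumR_const Rmult_sumr.
by apply: sumR_le => y _; exact: w_ratio.
Qed.

(* [rho / |t|] bounds the probability that [x] is ranked first. *)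
Lemma PL_event_first_only_le t x P A : uniq t -> (0 < size t)%N -> 0 <= A ->
  (forall y, y \in t -> y != x -> PL_event (rem y t) (fun s => P (y :: s)) = 0) ->
  (x \in t -> PL_event (rem x t) (fun s => P (x :: s)) <= A) ->
  PL_event t P <= rho / INR (size t) * A.
Proof.
move=> ut t0 A0 others first_x; have tW := wsum_gt0 t0.
have rho0 : 0 <= rho / INR (size t).
  by apply/Rlt_le/Rdiv_lt_0_compat; [have := rho_ge1 x; lra | exact/lt_0_INR/ltP].
rewrite PL_event_first //.
apply: (Rle_trans _ (\big[Rplus/R0]_(y <- t) (if y == x then w x / wsum t * A else 0))).
  apply: sumR_le => y yt; case: (eqVneq y x) => [yx|yx].
    rewrite yx in yt *; apply: Rmult_le_compat_l; last exact: first_x.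
    by apply/Rlt_le/Rdiv_lt_0_compat.
  by rewrite others // Rmult_0_r; lra.
rewrite sumR_pred1_uniq //; case: (x \in t); last exact: Rmult_le_pos.
by apply: Rmult_le_compat_r => //; exact: wshare_le.
Qed.

Lemma PL_index_le t x j : uniq t -> (j < size t)%N ->
  PL_event t (fun s => index x s == j) <= rho / (INR (size t) - INR j).
Proof.
elim: j t => [|j IH] t ut jt.
  rewrite [INR 0]/= Rminus_0_r -[X in _ <= X]Rmult_1_r.
  apply: (PL_event_first_only_le (x := x)) => //; first lra.
    by move=> y _ yx; apply: PL_event_pred0 => s /=; rewrite (negbTE yx).
  by move=> _; rewrite (@eq_PL_event _ _ xpredT) ?PL_event_predT ?rem_uniq // => [|s /=]; [lra | rewrite eqxx].
have t0 : (0 < size t)%N by apply: leq_ltn_trans jt.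
apply: PL_event_first_le => // y yt; case: (eqVneq y x) => [->|yx].
  rewrite PL_event_pred0 => [|s /=]; last by rewrite eqxx.
  apply/Rlt_le/Rdiv_lt_0_compat; first by have := rho_ge1 x; lra.
  by apply/Rlt_0_minus/lt_INR/ltP.
rewrite (@eq_PL_event _ _ (fun s => index x s == j)) => [|s /=]; last by rewrite (negbTE yx).
rewrite -(INR_size_rem_sub _ yt); apply: IH; first exact: rem_uniq.
by rewrite size_rem //; case: (size t) jt.
Qed.

Lemma PL_index0_pair_le t x x' j : uniq t -> x != x' -> (j < size t)%N ->
  PL_event t (fun s => (index x s == 0%N) && (index x' s == j))
  <= rho / INR (size t) * (rho / (INR (size t) - INR j)).
Proof.
move=> ut xx' jt; have t0 : (0 < size t)%N by apply: leq_ltn_trans jt.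
have A0 : 0 <= rho / (INR (size t) - INR j).
  by apply/Rlt_le/Rdiv_lt_0_compat; [have := rho_ge1 x; lra | apply/Rlt_0_minus/lt_INR/ltP].
apply: (PL_event_first_only_le (x := x)) => //.
  by move=> y _ yx; apply: PL_event_pred0 => s /=; rewrite (negbTE yx).
move=> xt; case: j jt A0 => [|j] jt A0.
  by rewrite PL_event_pred0 // => s /=; rewrite eqxx eq_sym (negbTE xx').
rewrite (@eq_PL_event _ _ (fun s => index x' s == j)) => [|s /=]; last first.
  by rewrite eqxx (negbTE xx').
rewrite -(INR_size_rem_sub _ xt); apply: PL_index_le; first exact: rem_uniq.
by rewrite size_rem //; case: (size t) jt.
Qed.

Lemma PL_index_pair_le t x x' j1 j2 : uniq t -> x != x' ->
  (j1 < size t)%N -> (j2 < size t)%N ->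
  PL_event t (fun s => (index x s == j1) && (index x' s == j2))
  <= rho / (INR (size t) - INR j1) * (rho / (INR (size t) - INR j2)).
Proof.
elim: j1 t j2 => [|j1 IH] t j2 ut xx' j1t j2t.
  by rewrite [INR 0]/= Rminus_0_r; exact: PL_index0_pair_le.
case: j2 j2t => [|j2] j2t.
  rewrite (@eq_PL_event _ _ (fun s => (index x' s == 0%N) && (index x s == j1.+1)));
    last by move=> s; rewrite andbC.
  by rewrite Rmult_comm [INR 0]/= Rminus_0_r; apply: PL_index0_pair_le; rewrite // eq_sym.
have t0 : (0 < size t)%N by apply: leq_ltn_trans j1t.
have bound_ge0 : 0 <= rho / (INR (size t) - INR j1.+1) * (rho / (INR (size t) - INR j2.+1)).
  have rho0 : 0 < rho by have := rho_ge1 x; lra.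
  by apply: Rmult_le_pos; apply/Rlt_le/Rdiv_lt_0_compat => //; apply/Rlt_0_minus/lt_INR/ltP.
apply: PL_event_first_le => // y yt.
case: (eqVneq y x) => [->|yx].
  by rewrite PL_event_pred0 // => s /=; rewrite eqxx.
case: (eqVneq y x') => [->|yx'].
  by rewrite PL_event_pred0 // => s /=; rewrite eqxx andbF.
rewrite (@eq_PL_event _ _ (fun s => (index x s == j1) && (index x' s == j2))); last first.
  by move=> s /=; rewrite (negbTE yx) (negbTE yx').
rewrite -!(INR_size_rem_sub _ yt); apply: IH; rewrite ?rem_uniq // size_rem //.
  by case: (size t) j1t.
by case: (size t) j2t.
Qed.

Lemma tail_pair_factor_le t x x' : x \in t -> x' \in rem x t ->
  tail_pair_factor (2 * rho - 2) (size t) <= wsum (rem x' (rem x t)) / wsum t.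
Proof.
move=> xt x't; set t' := rem x' (rem x t).
have tp := perm_rem2 xt x't.
have rho1 := rho_ge1 x.
have n0 := pos_INR (size t').
have R0 := wsum_ge0 t'.
have avoid : INR (size t') * (w x + w x') <= 2 * rho * wsum t'.
  rewrite -sumR_const /wsum Rmult_sumr.
  by apply: sumR_le => y _; have := w_ratio x y; have := w_ratio x' y; lra.
rewrite (perm_size tp) (perm_wsum tp) /wsum !big_cons -/(wsum t') /tail_pair_factor /=.
rewrite -/(INR (size t').+2) !S_INR; set m := INR (size t') + 1 + 1.
have m1 : 1 < m by rewrite /m; lra.
have a0 : 0 <= 2 * rho - 2 by lra.
apply: (Rle_trans _ ((m - 2) / m * (m / (m + (2 * rho - 2))))).
  apply: Rmult_le_compat_l; last exact: Rpower_pred_div_le.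
  by apply: Rmult_le_pos; [rewrite /m; lra | apply/Rlt_le/Rinv_0_lt_compat; lra].
apply: (Rle_trans _ (INR (size t') / (INR (size t') + 2 * rho))); first by right; rewrite /m; field; lra.
apply: Rdiv_le_cross; [lra | have := w_gt0 x; have := w_gt0 x'; lra | nra].
Qed.

Lemma PL_tail_pair_ge l t x x' : uniq t -> x \in t -> x' \in t -> x != x' ->
  (l < size t)%N -> tail_pair_lb (2 * rho - 2) (size t) l
  <= PL_event t (fun s => (l <= index x s) && (l <= index x' s))%N.
Proof.
elim: l t => [|l IH] t ut xt x't xx' ln.
  by rewrite (@eq_PL_event _ _ xpredT) ?PL_event_predT //=; lra.
have x'r : x' \in rem x t by rewrite (mem_rem_uniq _ ut) inE eq_sym xx'.
set t' := rem x' (rem x t); have tp := perm_rem2 xt x'r.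
have t0 : (0 < size t)%N by apply: leq_ltn_trans ln.
have ln' : (l < (size t).-1)%N by case: (size t) ln.
rewrite PL_event_first // (perm_big _ tp) !big_cons.
rewrite [X in _ <= _ * X + _]PL_event_pred0 => [|s /=]; last by rewrite eqxx.
rewrite [X in _ <= _ + (_ * X + _)]PL_event_pred0 => [|s /=]; last by rewrite eqxx andbF.
rewrite !Rmult_0_r !Rplus_0_l /= -/t'.
set g := tail_pair_lb _ (size t).-1 l.
have g0 : 0 <= g by exact: tail_pair_lb_ge0.
apply: (Rle_trans _ (wsum t' / wsum t * g)).
  by apply: Rmult_le_compat_r => //; exact: tail_pair_factor_le.
rewrite /Rdiv Rmult_comm -Rmult_assoc /wsum Rmult_sumr -/(wsum t).
rewrite Rmult_comm Rmult_sumr; apply: sumR_le => y yt.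
rewrite (_ : / wsum t * (g * w y) = w y * / wsum t * g); last ring.
apply: Rmult_le_compat_l.
  by apply/Rlt_le/Rdiv_lt_0_compat; [exact: w_gt0 | exact: wsum_gt0].
move: yt; rewrite mem_rem_uniq ?rem_uniq // inE mem_rem_uniq // inE => /and3P[yx' yx yt].
rewrite (negbTE yx) (negbTE yx') /g -(size_rem yt).
apply: IH; rewrite ?rem_uniq ?mem_rem_uniq ?inE ?size_rem // 1?eq_sym ?yx ?yx' //.
Qed.
End PlackettLuce.

Lemma PL_seq_codom (T : eqType) (w : T -> R) (w_gt0 : forall x, 0 < w x) n (f : 'I_n -> T) :
  \big[Rmult/R1]_(i < n | (i.+1 < n)%N)
     (w (f i) / \big[Rplus/R0]_(i' < n | (i <= i')%N) w (f i'))
  = PL_seq w (codom f).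
Proof.
elim: n f => [|n IH] f; first by rewrite big_ord0 codomE enum_ord0.
rewrite codomE enum_ordSl /= -map_comp -codomE -IH.
rewrite big_mkcond big_ord_recl /=.
set g := f \o lift ord0.
have tail_sum (i : 'I_n) : \big[Rplus/R0]_(i' < n.+1 | (bump 0 i <= i')%N) w (f i')
                  = \big[Rplus/R0]_(i' < n | (i <= i')%N) w (g i').
  rewrite big_mkcond big_ord_recl /= Rplus_0_l [RHS]big_mkcond.
  by apply: eq_bigr => i' _; rewrite /g /bump.
rewrite [X in _ * X = _](_ : _ = \big[Rmult/R1]_(i < n | (i.+1 < n)%N)
    (w (g i) / \big[Rplus/R0]_(i' < n | (i <= i')%N) w (g i'))); last first.
  by rewrite [RHS]big_mkcond; apply: eq_bigr => i _; rewrite tail_sum.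
rewrite /wsum codomE big_map big_enum /=.
clear IH tail_sum; rewrite {}/g; case: n f => [|n] f.
  by rewrite !big_ord0 /=; have := w_gt0 (f ord0) => ?; field; lra.
by rewrite /= big_mkcond big_ord_recl.
Qed.

Lemma codom_ffun_inj (aT : finType) (rT : eqType) : injective (fun f : {ffun aT -> rT} => codom f).
Proof. by move=> f g; rewrite /= !codom_ffun => /val_inj/(can_inj fgraphK). Qed.

Section Rankings.
Variables (d : nat) (S : {set 'I_d}).
Implicit Type sigma : {ffun 'I_#|S| -> 'I_d}.

Lemma ranking_codom sigma : ranking sigma -> perm_eq (codom sigma) (enum S).
Proof.
move=> /andP[/injectiveP inj /forallP inS].
have u1 : uniq (codom sigma) by rewrite codomE map_inj_uniq ?enum_uniq.
apply: uniq_perm => //; first exact: enum_uniq.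
have sub : {subset codom sigma <= enum S} by move=> y /codomP[j ->]; rewrite mem_enum.
have size_le : (size (enum S) <= size (codom sigma))%N by rewrite size_codom card_ord -cardE.
by have [] := uniq_min_size u1 sub size_le.
Qed.

Lemma ranking_exists_index sigma x (q : pred nat) : ranking sigma -> x \in S ->
  [exists j, (sigma j == x) && q j] = q (index x (codom sigma)).
Proof.
move=> rs xS; have /andP[/injectiveP inj _] := rs.
have /codomP[j ->] : x \in codom sigma by rewrite (perm_mem (ranking_codom rs)) mem_enum.
rewrite codomE (index_map inj) index_enum_ord.
by apply/existsP/idP => [[j' /andP[/eqP/inj <-]] // | qj]; exists j; rewrite eqxx.
Qed.

Lemma pos_is_codom sigma x p : ranking sigma -> x \in S ->
  pos_is sigma x p = ((index x (codom sigma)).+1 == p).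
Proof. exact: (@ranking_exists_index sigma x (fun j => j.+1 == p)). Qed.

Lemma pos_gt_codom sigma x l : ranking sigma -> x \in S ->
  pos_gt sigma x l = (l <= index x (codom sigma))%N.
Proof. exact: (@ranking_exists_index sigma x (fun j => l < j.+1)%N). Qed.

Lemma PL_P_event (theta : 'I_d -> R) (E : {ffun 'I_#|S| -> 'I_d} -> bool) (P : pred (seq 'I_d)) :
  (forall sigma, ranking sigma -> E sigma = P (codom sigma)) ->
  PL_P theta S E = PL_event (fun x => exp (theta x)) (enum S) P.
Proof.
move=> EP; rewrite /PL_P big_mkcondr.
rewrite (eq_bigr (fun sigma => if P (codom sigma) then PL_seq (fun x => exp (theta x)) (codom sigma) else 0));
  last by move=> sigma rs; rewrite EP // /PL_prob (PL_seq_codom (fun x => exp_pos (theta x))).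
rewrite -big_filter -(big_map (fun f : {ffun 'I_#|S| -> 'I_d} => codom f) xpredT
  (fun s => if P s then PL_seq (fun x => exp (theta x)) s else 0)).
apply: perm_big; apply: uniq_perm.
- by rewrite map_inj_uniq ?filter_uniq ?index_enum_uniq //; exact: codom_ffun_inj.
- exact: permutations_uniq.
move=> s; rewrite mem_permutations; apply/mapP/idP => [[sigma] | ps].
  by rewrite mem_filter => /andP[rs _] ->; exact: ranking_codom.
have sz : size s == #|'I_#|S| | by rewrite card_ord (perm_size ps) cardE.
pose sigma := Finfun (Tuple sz).
have cs : codom sigma = s by rewrite codom_ffun FinfunK.
exists sigma => //; rewrite mem_filter mem_index_enum andbT.
rewrite /ranking /injectiveb /dinjectiveb -codomE cs (perm_uniq ps) enum_uniq /=.
by apply/forallP => j; rewrite -mem_enum -(perm_mem ps) -cs codom_f.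
Qed.

Variables (theta : 'I_d -> R) (rho : R).
Hypothesis theta_ratio : forall x y, exp (theta x) <= rho * exp (theta y).
Let w_gt0 x : 0 < exp (theta x) := exp_pos (theta x).
Let size_enumS : size (enum S) = #|S|. Proof. by rewrite cardE. Qed.

Lemma PL_P_tail_pair_ge i i' l : i \in S -> i' \in S -> i != i' -> (l < #|S|)%N ->
  (INR #|S| - INR l) * (INR #|S| - INR l - 1) / (INR #|S| * (INR #|S| - 1))
    * Rpower ((INR #|S| - INR l) / INR #|S|) (2 * rho - 2)
  <= PL_P theta S (fun sigma => pos_gt sigma i l && pos_gt sigma i' l).
Proof.
move=> iS i'S ii' lS; have S2 : (1 < #|S|)%N by apply/card_gt1P; exists i, i'.
have k2 : 2 <= INR #|S| by apply: (le_INR 2); apply/leP.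
rewrite (@PL_P_event theta _ (fun s => (l <= index i s) && (l <= index i' s))%N); last first.
  by move=> sigma rs; rewrite !pos_gt_codom.
have lS' : (l < size (enum S))%N by rewrite size_enumS.
rewrite -mem_enum in iS; rewrite -mem_enum in i'S.
apply: Rle_trans (PL_tail_pair_ge w_gt0 theta_ratio (enum_uniq _) iS i'S ii' lS'); right.
rewrite size_enumS; apply: (Rmult_eq_reg_l (INR #|S| * (INR #|S| - 1))); last nra.
by rewrite tail_pair_lb_closed //; field; lra.
Qed.

Lemma PL_P_pos_le i l : i \in S -> (0 < l <= #|S|)%N ->
  PL_P theta S (fun sigma => pos_is sigma i l) <= rho / (INR #|S| - INR l + 1).
Proof.
move=> iS /andP[l0 lS].
rewrite (@PL_P_event theta _ (fun s => index i s == l.-1)); last first.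
  by move=> sigma rs; rewrite pos_is_codom //; case: (l) l0.
have lS' : (l.-1 < size (enum S))%N by rewrite size_enumS; case: (l) l0 lS.
apply: Rle_trans (PL_index_le w_gt0 theta_ratio i (enum_uniq _) lS') _.
by right; rewrite size_enumS INR_pred //; congr (Rdiv _); ring.
Qed.

Lemma PL_P_pos_pair_le i i' l1 l2 : i \in S -> i' \in S -> i != i' ->
  (0 < l1 <= #|S|)%N -> (0 < l2 <= #|S|)%N ->
  PL_P theta S (fun sigma => pos_is sigma i l1 && pos_is sigma i' l2)
  <= rho / (INR #|S| - INR l1 + 1) * (rho / (INR #|S| - INR l2 + 1)).
Proof.
move=> iS i'S ii' /andP[l10 l1S] /andP[l20 l2S].
rewrite (@PL_P_event theta _ (fun s => (index i s == l1.-1) && (index i' s == l2.-1))); last first.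
  by move=> sigma rs; rewrite !pos_is_codom //; case: (l1) l10; case: (l2) l20.
have l1S' : (l1.-1 < size (enum S))%N by rewrite size_enumS; case: (l1) l10 l1S.
have l2S' : (l2.-1 < size (enum S))%N by rewrite size_enumS; case: (l2) l20 l2S.
apply: Rle_trans (PL_index_pair_le w_gt0 theta_ratio (enum_uniq _) ii' l1S' l2S') _.
by right; rewrite size_enumS !INR_pred //; congr (Rdiv _ _ * Rdiv _ _); ring.
Qed.

End Rankings.

Lemma exp_ratio_le (T : Type) (theta : T -> R) b : (forall x, Rabs (theta x) <= b) ->
  forall x y, exp (theta x) <= exp (2 * b) * exp (theta y).
Proof.
move=> hb x y; rewrite -exp_plus; apply: exp_le_exp; have := hb x; have := hb y.
by have := Rle_abs (theta x); have := Rle_abs (- theta y); rewrite Rabs_Ropp; lra.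
Qed.

Theorem lemma4 (d : nat) (theta : 'I_d -> R) (b : R) (S : {set 'I_d})
  (hS : (2 <= #|S|)%N)
  (hb : forall i, Rabs (theta i) <= b)
  (i i' : 'I_d) (hi : i \in S) (hi' : i' \in S) (hii' : i != i')
  (l l1 l2 : nat)
  (hl : (1 <= l <= #|S| - 1)%N) (hl1 : (1 <= l1 <= #|S| - 1)%N)
  (hl2 : (1 <= l2 <= #|S| - 1)%N) :
  let k := INR #|S| in
  PL_P theta S (fun sigma => pos_gt sigma i l && pos_gt sigma i' l) >=
     exp (-4 * b) * (k - INR l) * (k - INR l - 1) / (k * (k - 1))
     * Rpower (1 - INR l / k) (2 * exp (2 * b) - 2)
  /\ PL_P theta S (fun sigma => pos_is sigma i l) <= exp (6 * b) / (k - INR l)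
  /\ ((k - INR l1 - 1) * (k - INR l2) <> 0 ->
      PL_P theta S (fun sigma => pos_is sigma i l1 && pos_is sigma i' l2)
        <= exp (10 * b) / ((k - INR l1 - 1) * (k - INR l2))).
Proof.
move=> k.
have b0 : 0 <= b by have := hb i; have := Rabs_pos (theta i); lra.
have theta_ratio := exp_ratio_le hb.
have [e4b e6b e10b] : [/\ exp (-4 * b) <= 1, exp (2 * b) <= exp (6 * b)
                        & exp (2 * b) * exp (2 * b) <= exp (10 * b)].
  by rewrite -exp_0 -exp_plus; split; apply: exp_le_exp; lra.
have e2b : 0 < exp (2 * b) := exp_pos _.
have k2 : 2 <= k by apply: (le_INR 2); apply/leP.
have range m : (1 <= m <= #|S| - 1)%N -> [/\ (0 < m <= #|S|)%N, (m < #|S|)%N & INR m + 1 <= k].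
  move=> /andP[m1 mS]; have mS' : (m < #|S|)%N by case: #|S| hS mS => // n; rewrite subn1.
  by rewrite m1 ltnW //; split => //; rewrite -S_INR; apply/le_INR/leP.
split; [|split].
- have [_ lS lk] := range l hl.
  apply: Rle_ge; apply: Rle_trans (PL_P_tail_pair_ge theta_ratio hi hi' hii' lS).
  rewrite -/k (_ : 1 - INR l / k = (k - INR l) / k); last by field; lra.
  have p0 : 0 < Rpower ((k - INR l) / k) (2 * exp (2 * b) - 2) := exp_pos _.
  have D0 : 0 < / (k * (k - 1)) by apply/Rinv_0_lt_compat; nra.
  rewrite /Rdiv !Rmult_assoc in p0 *; set r := (k - INR l) * _.
  have r0 : 0 <= r by rewrite /r; apply: Rmult_le_pos; [lra | apply: Rmult_le_pos; [lra | nra]].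
  nra.
- have [lS _ lk] := range l hl.
  apply: Rle_trans (PL_P_pos_le theta_ratio hi lS) _.
  by rewrite -/k; apply: Rdiv_le_cross; [lra | lra | nra].
- move=> nz; have [l1S _ l1k] := range l1 hl1; have [l2S _ l2k] := range l2 hl2.
  apply: Rle_trans (PL_P_pos_pair_le theta_ratio hi hi' hii' l1S l2S) _.
  have D1 : 0 < k - INR l1 - 1.
    by apply: Rnot_le_lt => D1; apply: nz; rewrite (_ : k - INR l1 - 1 = 0); [ring | lra].
  rewrite -/k /Rdiv -Rmult_assoc (Rmult_comm _ (exp (2 * b))) -Rmult_assoc Rmult_assoc -Rinv_mult.
  apply: Rdiv_le_cross; [nra | nra |].
  by apply: Rmult_le_compat => //; [nra | nra | nra].
Qed.
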